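(* Let $\mathfrak{g}_\alpha$, $-1\le\alpha\le1$, be the eight-dimensional real Lie algebras with basis $\{X_1,\dots,X_8\}$ and nonzero brackets $[X_1,X_2]=2X_2$, $[X_1,X_3]=-2X_3$, $[X_2,X_3]=X_1$, $[X_1,X_4]=X_4$, $[X_1,X_5]=-X_5$, $[X_1,X_6]=X_6$, $[X_1,X_7]=-X_7$, $[X_2,X_5]=X_4$, $[X_2,X_7]=X_6$, $[X_3,X_4]=X_5$, $[X_3,X_6]=X_7$, $[X_4,X_8]=X_4$, $[X_5,X_8]=X_5$, $[X_6,X_8]=\alpha X_6$, $[X_7,X_8]=\alpha X_7$. For every $-1<\alpha\le1$, the Lie algebra $\mathfrak{g}_{-1}$ is a linear deformation of $\mathfrak{g}_\alpha$. Moreover this deformation generates two non-constant invariants for the coadjoint representation, i.e. $\mathcal{N}(\mathfrak{g}_\alpha)=0$ while $\mathcal{N}(\mathfrak{g}_{-1})=2$.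
   Context: A linear deformation of a Lie algebra $\mathfrak{g}$ with bracket $[\cdot,\cdot]$ is a Lie algebra structure on the same vector space of the form $[X,Y]_t=[X,Y]+t\,\varphi(X,Y)$, with $t$ a scalar and $\varphi$ a skew-symmetric bilinear map (an integrable 2-cocycle with values in the adjoint module) such that $[\cdot,\cdot]_t$ satisfies the Jacobi identity. For a Lie algebra $\mathfrak{g}$ with basis $\{X_1,\dots,X_n\}$, structure constants $[X_i,X_j]=C_{ij}^kX_k$ and dual coordinates $x_1,\dots,x_n$, the number of functionally independent invariants of the coadjoint representation (solutions $F$ of the system $C_{ij}^k x_k\,\partial F/\partial x_j=0$, $1\le i\le n$) is $\mathcal{N}(\mathfrak{g})=\dim\mathfrak{g}-\operatorname{rank}(C_{ij}^kx_k)$, the rank being the generic rank of the antisymmetric matrix with entries $C_{ij}^kx_k$. *)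

From HB Require Import structures.
From mathcomp Require Import all_boot all_order all_algebra.
From mathcomp Require Import reals.
Set Implicit Arguments. Unset Strict Implicit. Unset Printing Implicit Defensive.
Import Order.TTheory GRing.Theory Num.Theory.
Local Open Scope ring_scope.

(* A bilinear map on R^n (row vectors 'rV[R]_n, basis e_k = delta_mx 0 k) is
   given by its structure constants C i j k = coefficient of X_k in [X_i, X_j]. *)
Definition bracket {R : nzRingType} {n : nat} (C : 'I_n -> 'I_n -> 'I_n -> R)
  (u v : 'rV[R]_n) : 'rV[R]_n :=
  \row_k \sum_(i < n) \sum_(j < n) u 0 i * v 0 j * C i j k.

Definition skew_bilinear {R : nzRingType} {n : nat} (C : 'I_n -> 'I_n -> 'I_n -> R) :=
  forall u v : 'rV[R]_n, bracket C u v = - bracket C v u.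

Definition is_Lie {R : nzRingType} {n : nat} (C : 'I_n -> 'I_n -> 'I_n -> R) :=
  skew_bilinear C /\
  forall u v w : 'rV[R]_n,
    bracket C u (bracket C v w) + bracket C v (bracket C w u)
      + bracket C w (bracket C u v) = 0.

Definition deform {R : nzRingType} {n : nat} (C phi : 'I_n -> 'I_n -> 'I_n -> R) (t : R) :=
  fun i j k => C i j k + t * phi i j k.

Definition is_linear_deformation {R : nzRingType} {n : nat}
  (C D : 'I_n -> 'I_n -> 'I_n -> R) :=
  exists (phi : 'I_n -> 'I_n -> 'I_n -> R) (t0 : R),
    skew_bilinear phi /\ (forall t : R, is_Lie (deform C phi t)) /\
    (forall i j k, D i j k = deform C phi t0 i j k).

Definition coadj_matrix {R : nzRingType} {n : nat} (C : 'I_n -> 'I_n -> 'I_n -> R)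
  (x : 'rV[R]_n) : 'M[R]_n :=
  \matrix_(i, j) \sum_(k < n) C i j k * x 0 k.

(* N(g) = N : dim g - generic rank of (C_ij^k x_k), the generic rank being the
   maximal rank over all points x. *)
Definition num_invariants {R : fieldType} {n : nat} (C : 'I_n -> 'I_n -> 'I_n -> R)
  (N : nat) : Prop :=
  (N <= n)%N /\
  (exists x : 'rV[R]_n, \rank (coadj_matrix C x) = (n - N)%N) /\
  (forall x : 'rV[R]_n, (\rank (coadj_matrix C x) <= n - N)%N).

(* Upper-triangular structure constants of g_alpha (0-based indices: X_1 = 0). *)
Definition g_up {R : nzRingType} (alpha : R) (i j k : nat) : R :=
  match i, j, k with
  | 0%N, 1%N, 1%N => 2%:R
  | 0%N, 2%N, 2%N => - 2%:R
  | 1%N, 2%N, 0%N => 1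
  | 0%N, 3%N, 3%N => 1
  | 0%N, 4%N, 4%N => - 1
  | 0%N, 5%N, 5%N => 1
  | 0%N, 6%N, 6%N => - 1
  | 1%N, 4%N, 3%N => 1
  | 1%N, 6%N, 5%N => 1
  | 2%N, 3%N, 4%N => 1
  | 2%N, 5%N, 6%N => 1
  | 3%N, 7%N, 3%N => 1
  | 4%N, 7%N, 4%N => 1
  | 5%N, 7%N, 5%N => alpha
  | 6%N, 7%N, 6%N => alpha
  | _, _, _ => 0
  end.

Definition gC {R : nzRingType} (alpha : R) (i j k : 'I_8) : R :=
  if (i < j)%N then g_up alpha i j k
  else if (j < i)%N then - g_up alpha j i k else 0.

From HB Require Import structures.
From mathcomp Require Import all_boot all_order all_algebra.
From mathcomp Require Import reals.
From mathcomp Require Import ring lra zify.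
Set Implicit Arguments.
Unset Strict Implicit.
Unset Printing Implicit Defensive.
Import Order.TTheory GRing.Theory Num.Theory.
Local Open Scope ring_scope.

(* Indices are 1-based in this comment and 0-based in the code.
   The structure constants of g_a are affine in a, so the Jacobiator of g_a is a
   polynomial of degree two in a; its three coefficients have integer entries and
   vanish by computation. Hence every g_b is the linear deformation
   g_a + (b - a) (g_1 - g_0) of every g_a.
   At x = e_4^* + e_7^* the coadjoint matrix of g_a times an explicit matrix is
   (a + 1) I, so N(g_a) = 0 for a <> -1. For a = -1 the gradients of two Casimir
   invariants, a quadratic and a cubic one, lie in the left kernel of the
   coadjoint matrix M(x); they are independent unless x_4 = x_5 = 0 or
   x_6 = x_7 = 0, and then rows 4, 5 (resp. 6, 7) of M(x) vanish since
   span(X_4, X_5) and span(X_6, X_7) are ideals. So rank M(x) <= 6 everywhere,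
   with equality at e_4^* + e_7^*, where M restricted to X_1, ..., X_6 squares
   to -1. *)

Section StructureConstants.
Variables (R : comNzRingType) (n : nat).
Implicit Types (C D E : 'I_n -> 'I_n -> 'I_n -> R) (u v w : 'rV[R]_n).

Definition skew_constants C := forall i j k, C i j k = - C j i k.

Definition jacobi_form C D i j k l :=
  \sum_m (C j k m * D i m l + C k i m * D j m l + C i j m * D k m l).

Lemma skew_bilinear_of_constants C : skew_constants C -> skew_bilinear C.
Proof.
move=> skewC u v; apply/rowP => k; rewrite !mxE exchange_big -sumrN.
apply: eq_bigr => i _; rewrite -sumrN; apply: eq_bigr => j _.
rewrite skewC; ring.
Qed.

Lemma bracket_bracketE C u v w l :
  bracket C u (bracket C v w) 0 l =
  \sum_i \sum_j \sum_k u 0 i * v 0 j * w 0 k * \sum_m C j k m * C i m l.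
Proof.
rewrite mxE; apply: eq_bigr => i _.
under eq_bigr do rewrite mxE mulr_sumr mulr_suml.
rewrite exchange_big; apply: eq_bigr => j _.
under eq_bigr do rewrite mulr_sumr mulr_suml.
rewrite exchange_big; apply: eq_bigr => k _.
rewrite mulr_sumr; apply: eq_bigr => m _; ring.
Qed.

Lemma is_Lie_of_constants C : skew_constants C ->
  (forall i j k l, jacobi_form C C i j k l = 0) -> is_Lie C.
Proof.
move=> skewC jacC; split=> [|u v w]; first exact: skew_bilinear_of_constants.
apply/rowP => l.
have addE (A B : 'rV[R]_n) : (A + B) 0 l = A 0 l + B 0 l by rewrite mxE.
rewrite !addE !bracket_bracketE mxE.
have rot (F : 'I_n -> 'I_n -> 'I_n -> R) :
    \sum_a \sum_b \sum_c F a b c = \sum_c \sum_a \sum_b F a b c.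
  by under eq_bigr do rewrite exchange_big; exact: exchange_big.
rewrite [X in _ + X + _]rot [X in _ + X]rot [X in _ + X]rot.
rewrite -!big_split /=; apply: big1 => i _.
rewrite -!big_split /=; apply: big1 => j _.
rewrite -!big_split /=; apply: big1 => k _.
transitivity (u 0 i * v 0 j * w 0 k * jacobi_form C C i j k l).
  by rewrite /jacobi_form !big_split /=; ring.
by rewrite jacC mulr0.
Qed.

Lemma jacobi_form_affine C D E (b : R) i j k l :
  (forall i j k, E i j k = C i j k + b * D i j k) ->
  jacobi_form E E i j k l = jacobi_form C C i j k l
    + b * (jacobi_form C D i j k l + jacobi_form D C i j k l)
    + b ^+ 2 * jacobi_form D D i j k l.
Proof.
move=> Edef; rewrite /jacobi_form mulrDr !mulr_sumr -!big_split /=.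
by apply: eq_bigr => m _; rewrite !Edef; ring.
Qed.

End StructureConstants.

Lemma jacobi_form_rmorph (S R : comNzRingType) (f : {rmorphism S -> R}) n
    (C D : 'I_n -> 'I_n -> 'I_n -> S) i j k l :
  jacobi_form (fun i j k => f (C i j k)) (fun i j k => f (D i j k)) i j k l
  = f (jacobi_form C D i j k l).
Proof. by rewrite rmorph_sum; apply: eq_bigr => m _; rewrite !rmorphD !rmorphM. Qed.

Lemma eq_is_Lie (R : nzRingType) n (C D : 'I_n -> 'I_n -> 'I_n -> R) :
  (forall i j k, C i j k = D i j k) -> is_Lie C -> is_Lie D.
Proof.
move=> eqCD; have eq_br u v : bracket C u v = bracket D u v.
  apply/rowP => k; rewrite !mxE.
  by apply: eq_bigr => i _; apply: eq_bigr => j _; rewrite eqCD.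
by case=> skewC jacC; split=> [u v | u v w]; rewrite -!eq_br.
Qed.

Definition ord_seq n : seq 'I_n.+1 :=
  [seq Ordinal (ltn_pmod k (ltn0Sn n)) | k <- iota 0 n.+1].

Lemma mem_ord_seq n (i : 'I_n.+1) : i \in ord_seq n.
Proof.
apply/mapP; exists (val i); first by rewrite mem_iota ltn_ord.
by apply: val_inj; rewrite /= modn_small.
Qed.

Lemma big_ord_seq (R : Type) (idx : R) (op : Monoid.law idx) n (F : 'I_n.+1 -> R) :
  \big[op/idx]_(i < n.+1) F i = \big[op/idx]_(i <- ord_seq n) F i.
Proof.
rewrite big_map -[iota 0 n.+1]/(index_iota 0 n.+1) big_mkord.
by apply: eq_bigr => k _; congr F; apply: val_inj; rewrite /= modn_small.
Qed.

Section Rank.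
Variable F : fieldType.

Lemma mxrank_mxsub m n m' n' (f : 'I_m' -> 'I_m) (g : 'I_n' -> 'I_n)
    (A : 'M[F]_(m, n)) :
  (\rank (mxsub f g A) <= \rank A)%N.
Proof.
rewrite -[A in mxsub _ _ A]mulmx1 mxsub_mul (leq_trans (mxrankM_maxl _ _)) //.
exact/mxrankS/rowsub_sub.
Qed.

Lemma mxrank_ge_invertible_sub m n r (f : 'I_r -> 'I_m) (g : 'I_r -> 'I_n)
    (A : 'M[F]_(m, n)) (B : 'M[F]_r) :
  mxsub f g A *m B = 1%:M -> (r <= \rank A)%N.
Proof.
case/mulmx1_unit => /mxrank_unit rankS _.
by rewrite -[X in (X <= _)%N]rankS mxrank_mxsub.
Qed.

Lemma mxrank2_of_entries n (K : 'M[F]_(2, n)) (j d : 'I_n) :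
  K 0 j != 0 -> K 0 d = 0 -> K 1 d != 0 -> (2 <= \rank K)%N.
Proof.
move=> Kj_neq0 Kd0 Kd_neq0.
pose inv := \matrix_(s < 2, t < 2)
  if s == 0 then (if t == 0 then (K 0 j)^-1 else 0)
  else (if t == 0 then - K 1 j / (K 0 j * K 1 d) else (K 1 d)^-1).
apply: (@mxrank_ge_invertible_sub _ _ _ id (fun s => if s == 0 then j else d) _ inv).
apply/matrixP => s t; rewrite !mxE !big_ord_recl big_ord0 !mxE.
have ord2 (u : 'I_2) : u = 0 \/ u = 1.
  by case: u => [[|[|//]] ?]; [left | right]; apply: val_inj.
by case: (ord2 s) => ->; case: (ord2 t) => ->; rewrite /= ?Kd0; field;
  rewrite Kd_neq0 ?Kj_neq0.
Qed.

Lemma mxrank_mul0_le m n p (A : 'M[F]_(m, n)) (B : 'M[F]_(n, p)) :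
  A *m B = 0 -> (\rank A + \rank B <= n)%N.
Proof.
move=> AB0; have /mxrankS : (A <= kermx B)%MS by rewrite sub_kermx AB0.
by rewrite mxrank_ker; have := rank_leq_row B; lia.
Qed.

End Rank.

Lemma gC_skew (R : comNzRingType) (a : R) : skew_constants (gC a).
Proof. by move=> i j k; rewrite /gC; case: ltngtP; rewrite ?opprK ?oppr0. Qed.

Lemma g_up_rmorph (S R : nzRingType) (f : {rmorphism S -> R}) a i j k :
  f (g_up a i j k) = g_up (f a) i j k.
Proof.
case: i => [|[|[|[|[|[|[|i]]]]]]]; case: j => [|[|[|[|[|[|[|[|j]]]]]]]] /=;
  try exact: rmorph0.
all: case: k => [|[|[|[|[|[|[|k]]]]]]] /=;
  by rewrite ?(rmorph0, rmorph1, rmorphN, rmorph_nat).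
Qed.

Lemma gC_rmorph (S R : nzRingType) (f : {rmorphism S -> R}) a i j k :
  f (gC a i j k) = gC (f a) i j k.
Proof.
rewrite /gC; case: ifP => _; first exact: g_up_rmorph.
by case: ifP => _; rewrite ?rmorphN ?rmorph0 ?g_up_rmorph.
Qed.

Lemma g_up_affine (R : nzRingType) (b : R) i j k :
  g_up b i j k = g_up 0 i j k + b * (g_up 1 i j k - g_up 0 i j k).
Proof.
case: i => [|[|[|[|[|[|[|i]]]]]]]; case: j => [|[|[|[|[|[|[|[|j]]]]]]]] /=;
  try by rewrite subrr mulr0 addr0.
all: case: k => [|[|[|[|[|[|[|k]]]]]]] /=;
  by rewrite ?(subrr, subr0, mulr0, mulr1, addr0, add0r).
Qed.

Lemma gC_affine (R : nzRingType) (b : R) i j k :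
  gC b i j k = gC 0 i j k + b * (gC 1 i j k - gC 0 i j k).
Proof.
rewrite /gC; case: ifP => _; first exact: g_up_affine.
case: ifP => _; last by rewrite subrr mulr0 addr0.
by rewrite (g_up_affine b) opprD -mulrN opprB opprK [- g_up 1 _ _ _ + _]addrC.
Qed.

Definition gC_base (i j k : 'I_8) : int := gC 0 i j k.
Definition gC_slope (i j k : 'I_8) : int := gC 1 i j k - gC 0 i j k.

Lemma gC_int_jacobi (i j k l : 'I_8) :
  [/\ jacobi_form gC_base gC_base i j k l = 0,
      jacobi_form gC_base gC_slope i j k l + jacobi_form gC_slope gC_base i j k l = 0
    & jacobi_form gC_slope gC_slope i j k l = 0].
Proof.
(* The enumeration of ['I_8] does not reduce under [vm_compute]; [ord_seq 7] does. *)
have check : all (fun i => all (fun j => all (fun k => all (fun l =>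
    let J C D := \sum_(m <- ord_seq 7)
      (C j k m * D i m l + C k i m * D j m l + C i j m * D k m l) in
    [&& J gC_base gC_base == 0,
        J gC_base gC_slope + J gC_slope gC_base == 0
      & J gC_slope gC_slope == 0])
    (ord_seq 7)) (ord_seq 7)) (ord_seq 7)) (ord_seq 7).
  by rewrite unlock; vm_compute.
move: check => /allP/(_ i (mem_ord_seq i))/allP/(_ j (mem_ord_seq j)).
move=> /allP/(_ k (mem_ord_seq k))/allP/(_ l (mem_ord_seq l)) /=.
by rewrite /jacobi_form !big_ord_seq => /and3P[/eqP-> /eqP-> /eqP->].
Qed.

Lemma gC_jacobi (R : comNzRingType) (b : R) i j k l :
  jacobi_form (gC b) (gC b) i j k l = 0.
Proof.
have [J00 J01 J11] := gC_int_jacobi i j k l.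
rewrite (@jacobi_form_affine _ _ (fun i j k => (gC_base i j k)%:~R)
           (fun i j k => (gC_slope i j k)%:~R) _ b) => [|i' j' k'].
  by rewrite !jacobi_form_rmorph -rmorphD J00 J01 J11 rmorph0 !mulr0 !addr0.
by rewrite /gC_base /gC_slope rmorphB !gC_rmorph rmorph0 rmorph1 -gC_affine.
Qed.

Lemma gC_is_Lie (R : comNzRingType) (b : R) : is_Lie (gC b).
Proof. exact: is_Lie_of_constants (@gC_skew R b) (@gC_jacobi R b). Qed.

Lemma gC_linear_deformation (R : comNzRingType) (a b : R) :
  is_linear_deformation (gC a) (gC b).
Proof.
pose phi i j k : R := gC 1 i j k - gC 0 i j k.
have deformE t i j k : deform (gC a) phi t i j k = gC (a + t) i j k.
  by rewrite /deform /phi [RHS]gC_affine [gC a _ _ _]gC_affine; ring.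
exists phi, (b - a); split; [|split].
- apply: skew_bilinear_of_constants => i j k.
  by rewrite /phi (gC_skew 1 i j k) (gC_skew 0 i j k); ring.
- by move=> t; apply: eq_is_Lie (gC_is_Lie (a + t)) => i j k; rewrite deformE.
- by move=> i j k; rewrite deformE addrC subrK.
Qed.

Local Notation ord8 k := (@Ordinal 8 k isT).
Local Notation widen6 := (widen_ord (isT : (6 <= 8)%N)).

Lemma big_ord8 (V : nmodType) (F : 'I_8 -> V) :
  \sum_(k < 8) F k = F (ord8 0) + F (ord8 1) + F (ord8 2) + F (ord8 3)
                     + F (ord8 4) + F (ord8 5) + F (ord8 6) + F (ord8 7).
Proof. by rewrite !big_ord_recl big_ord0 addr0 !addrA; repeat f_equal; apply: val_inj. Qed.

Definition regular_point {R : nzRingType} : 'rV[R]_8 :=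
  \row_k ((k == 3 :> nat) || (k == 6 :> nat))%:R.

Definition unit_rows {R : nzRingType} (s : nat) : 'M[R]_(2, 8) :=
  \matrix_(p, r) (val r == s + val p)%:R.

Section CoadjointMatrix.
Variable R : comNzRingType.
Implicit Type x : 'rV[R]_8.

Definition coadj_gC_upper (a : R) x (i j : nat) : R :=
  match i, j with
  | 0, 1 => 2 * x 0 (ord8 1) | 0, 2 => - 2 * x 0 (ord8 2) | 1, 2 => x 0 (ord8 0)
  | 0, 3 => x 0 (ord8 3) | 0, 4 => - x 0 (ord8 4)
  | 0, 5 => x 0 (ord8 5) | 0, 6 => - x 0 (ord8 6)
  | 1, 4 => x 0 (ord8 3) | 1, 6 => x 0 (ord8 5)
  | 2, 3 => x 0 (ord8 4) | 2, 5 => x 0 (ord8 6)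
  | 3, 7 => x 0 (ord8 3) | 4, 7 => x 0 (ord8 4)
  | 5, 7 => a * x 0 (ord8 5) | 6, 7 => a * x 0 (ord8 6)
  | _, _ => 0
  end.

Lemma coadj_gCE a x : coadj_matrix (gC a) x = \matrix_(i, j)
  if (i < j)%N then coadj_gC_upper a x i j
  else if (j < i)%N then - coadj_gC_upper a x j i else 0.
Proof.
apply/matrixP => i j; rewrite !mxE big_ord8.
by case: i => [[|[|[|[|[|[|[|[|//]]]]]]]] ?]; case: j => [[|[|[|[|[|[|[|[|//]]]]]]]] ?];
  rewrite /gC /=; ring.
Qed.

Definition coadj_regular_adj (a : R) : 'M[R]_8 := \matrix_(i, j)
  match val i, val j with
  | 1, 4 | 2, 5 => - (a + 1) | 4, 1 | 5, 2 => a + 1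
  | 0, 3 => - a | 3, 0 => a | 0, 6 | 7, 3 | 7, 6 => 1 | 3, 7 | 6, 0 | 6, 7 => -1
  | _, _ => 0
  end.

Lemma coadj_regular_mul_adj a :
  coadj_matrix (gC a) regular_point *m coadj_regular_adj a = (a + 1)%:M.
Proof.
apply/matrixP => i j; rewrite coadj_gCE !mxE big_ord8 !mxE.
by case: i => [[|[|[|[|[|[|[|[|//]]]]]]]] ?]; case: j => [[|[|[|[|[|[|[|[|//]]]]]]]] ?];
  rewrite /= !mxE /=; ring.
Qed.

Lemma coadj_gCm1_principal6 :
  mxsub widen6 widen6 (coadj_matrix (gC (-1)) regular_point)
    *m mxsub widen6 widen6 (coadj_matrix (gC (-1)) regular_point) = - 1%:M :> 'M[R]_6.
Proof.
apply/matrixP => i j; rewrite coadj_gCE !mxE !big_ord_recl big_ord0 !mxE.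
by case: i => [[|[|[|[|[|[|//]]]]]] ?]; case: j => [[|[|[|[|[|[|//]]]]]] ?];
  rewrite /= !mxE /=; ring.
Qed.

(* Row 0 is the gradient of x3 x6 - x4 x5 and row 1 that of
   x0 (x3 x6 + x4 x5) + 2 x1 x4 x6 - 2 x2 x3 x5 + x7 (x3 x6 - x4 x5). *)
Definition casimir_grads x : 'M[R]_(2, 8) := \matrix_(p, r)
  if val p == 0%N then
    match val r with
    | 3 => x 0 (ord8 6) | 4 => - x 0 (ord8 5) | 5 => - x 0 (ord8 4) | 6 => x 0 (ord8 3)
    | _ => 0
    end
  else
    match val r with
    | 0 => x 0 (ord8 3) * x 0 (ord8 6) + x 0 (ord8 4) * x 0 (ord8 5)
    | 1 => 2 * x 0 (ord8 4) * x 0 (ord8 6)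
    | 2 => - 2 * x 0 (ord8 3) * x 0 (ord8 5)
    | 3 => x 0 (ord8 0) * x 0 (ord8 6) - 2 * x 0 (ord8 2) * x 0 (ord8 5)
           + x 0 (ord8 7) * x 0 (ord8 6)
    | 4 => x 0 (ord8 0) * x 0 (ord8 5) + 2 * x 0 (ord8 1) * x 0 (ord8 6)
           - x 0 (ord8 7) * x 0 (ord8 5)
    | 5 => x 0 (ord8 0) * x 0 (ord8 4) - 2 * x 0 (ord8 2) * x 0 (ord8 3)
           - x 0 (ord8 7) * x 0 (ord8 4)
    | 6 => x 0 (ord8 0) * x 0 (ord8 3) + 2 * x 0 (ord8 1) * x 0 (ord8 4)
           + x 0 (ord8 7) * x 0 (ord8 3)
    | _ => x 0 (ord8 3) * x 0 (ord8 6) - x 0 (ord8 4) * x 0 (ord8 5)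
    end.

Lemma casimir_grads_ker x : casimir_grads x *m coadj_matrix (gC (-1)) x = 0.
Proof.
apply/matrixP => p q; rewrite coadj_gCE !mxE big_ord8 !mxE.
by case: p => [[|[|//]] ?]; case: q => [[|[|[|[|[|[|[|[|//]]]]]]]] ?]; rewrite /=; ring.
Qed.

Lemma unit_rows3_ker a x : x 0 (ord8 3) = 0 -> x 0 (ord8 4) = 0 ->
  unit_rows 3 *m coadj_matrix (gC a) x = 0.
Proof.
move=> x3 x4; apply/matrixP => p q; rewrite coadj_gCE !mxE big_ord8 !mxE.
by case: p => [[|[|//]] ?]; case: q => [[|[|[|[|[|[|[|[|//]]]]]]]] ?];
  rewrite /= ?x3 ?x4; ring.
Qed.

Lemma unit_rows5_ker a x : x 0 (ord8 5) = 0 -> x 0 (ord8 6) = 0 ->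
  unit_rows 5 *m coadj_matrix (gC a) x = 0.
Proof.
move=> x5 x6; apply/matrixP => p q; rewrite coadj_gCE !mxE big_ord8 !mxE.
by case: p => [[|[|//]] ?]; case: q => [[|[|[|[|[|[|[|[|//]]]]]]]] ?];
  rewrite /= ?x5 ?x6; ring.
Qed.

End CoadjointMatrix.

Lemma rank_coadj_regular (R : fieldType) (a : R) : a + 1 != 0 ->
  \rank (coadj_matrix (gC a) regular_point) = 8%N.
Proof.
move=> a1_neq0; apply: mxrank_unit.
apply: (proj1 (@mulmx1_unit _ _ _ ((a + 1)^-1 *: coadj_regular_adj a) _)).
by rewrite -scalemxAr coadj_regular_mul_adj scale_scalar_mx mulVf.
Qed.

Lemma rank_coadj_gCm1_regular (R : fieldType) :
  (6 <= \rank (coadj_matrix (gC (-1 : R)) regular_point))%N.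
Proof.
apply: (@mxrank_ge_invertible_sub _ _ _ _ widen6 widen6 _
  (- mxsub widen6 widen6 (coadj_matrix (gC (-1)) regular_point))).
by rewrite mulmxN coadj_gCm1_principal6 opprK.
Qed.

Lemma mul_pairs_eq0 (R : idomainType) (a b c d : R) :
  a * c = 0 -> a * d = 0 -> b * c = 0 -> b * d = 0 ->
  (a = 0 /\ b = 0) \/ (c = 0 /\ d = 0).
Proof.
have cancel (u v : R) : u != 0 -> u * v = 0 -> v = 0.
  by move=> /negPf u_neq0 /eqP; rewrite mulf_eq0 u_neq0 => /eqP.
move=> ac ad bc bd; have [a0 | a_neq0] := eqVneq a 0.
  have [b0 | b_neq0] := eqVneq b 0; first by left.
  by right; split; apply: cancel b_neq0 _.
by right; split; apply: cancel a_neq0 _.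
Qed.

Lemma rank_coadj_gCm1_le (R : fieldType) (x : 'rV[R]_8) : 2 != 0 :> R ->
  (\rank (coadj_matrix (gC (-1)) x) <= 6)%N.
Proof.
move=> two_neq0.
have bound K : K *m coadj_matrix (gC (-1)) x = 0 -> (2 <= \rank K)%N ->
    (\rank (coadj_matrix (gC (-1)) x) <= 6)%N.
  by move=> /mxrank_mul0_le; lia.
have [/andP[/eqP x3 /eqP x4] | nz34] :=
  boolP ((x 0 (ord8 3) == 0) && (x 0 (ord8 4) == 0)).
  apply: bound (unit_rows3_ker _ x3 x4) _.
  by apply: (@mxrank2_of_entries _ _ _ (ord8 3) (ord8 4)); rewrite !mxE ?oner_neq0.
have [/andP[/eqP x5 /eqP x6] | nz56] :=
  boolP ((x 0 (ord8 5) == 0) && (x 0 (ord8 6) == 0)).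
  apply: bound (unit_rows5_ker _ x5 x6) _.
  by apply: (@mxrank2_of_entries _ _ _ (ord8 5) (ord8 6)); rewrite !mxE ?oner_neq0.
apply: bound (casimir_grads_ker x) _.
have [j Kj] : exists j, casimir_grads x 0 j != 0.
  case/nandP: nz34 => [x3 | x4]; [exists (ord8 6) | exists (ord8 5)];
    by rewrite !mxE ?oppr_eq0.
suff [d Kd0 Kd] : exists2 d, casimir_grads x 0 d = 0 & casimir_grads x 1 d != 0.
  exact: mxrank2_of_entries Kj Kd0 Kd.
have [w0|] := eqVneq (casimir_grads x 1 (ord8 0)) 0; last by exists (ord8 0) => //; rewrite mxE.
have [w1|] := eqVneq (casimir_grads x 1 (ord8 1)) 0; last by exists (ord8 1) => //; rewrite mxE.
have [w2|] := eqVneq (casimir_grads x 1 (ord8 2)) 0; last by exists (ord8 2) => //; rewrite mxE.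
have [w7|] := eqVneq (casimir_grads x 1 (ord8 7)) 0; last by exists (ord8 7) => //; rewrite mxE.
move: w0 w1 w2 w7; rewrite !mxE /= => w0 w1 w2 w7.
have halve (y : R) : y + y = 0 -> y = 0.
  by move=> /eqP; rewrite -mulr2n -mulr_natl mulf_eq0 (negPf two_neq0) => /eqP.
have x36 : x 0 (ord8 3) * x 0 (ord8 6) = 0.
  by apply: halve; rewrite -[RHS](addr0 0) -{1}w0 -w7; ring.
have x45 : x 0 (ord8 4) * x 0 (ord8 5) = 0.
  by apply: halve; rewrite -[RHS](subr0 0) -{1}w0 -w7; ring.
have x46 : x 0 (ord8 4) * x 0 (ord8 6) = 0 by apply: halve; rewrite -[RHS]w1; ring.
have x35 : x 0 (ord8 3) * x 0 (ord8 5) = 0.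
  by apply: halve; rewrite -[RHS]oppr0 -w2; ring.
have [[x3 x4] | [x6 x5]] := mul_pairs_eq0 x36 x35 x46 x45.
  by rewrite x3 x4 eqxx in nz34.
by rewrite x5 x6 eqxx in nz56.
Qed.

Theorem proposition2 (R : realType) :
  (forall alpha : R, -1 < alpha <= 1 ->
     is_linear_deformation (gC alpha) (gC (-1))) /\
  (forall alpha : R, -1 < alpha <= 1 -> num_invariants (gC alpha) 0) /\
  num_invariants (gC (-1 : R)) 2.
Proof.
split; [|split].
- by move=> alpha _; exact: gC_linear_deformation.
- move=> alpha /andP[alpha_gt _]; split=> //; split=> [|x]; last exact: rank_leq_row.
  exists regular_point; rewrite rank_coadj_regular // gt_eqF //; lra.
- split=> //; split=> [|x]; last by apply: rank_coadj_gCm1_le; rewrite pnatr_eq0.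
  exists regular_point; apply/eqP.
  by rewrite eqn_leq rank_coadj_gCm1_le ?pnatr_eq0 // rank_coadj_gCm1_regular.
Qed.
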